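(* Let $f:\mathbb{R}^n\to\mathbb{R}^n$ be locally Lipschitz with $f(0)=0$ and suppose there exists a convex Lyapunov function $V\in C^1(\mathbb{R}^n;\mathbb{R}^+)$ for $\dot z=f(z)$. Let $\bar\varphi:\mathbb{R}^n\to(0,+\infty)$ be continuous such that for every $x\in\mathbb{R}^n$ and $h\in[0,\bar\varphi(x)]$ the equation $Y=x+hf(Y)$ has a unique solution $Y\in\mathbb{R}^n$. Then for each $r>0$, $0\in\mathbb{R}^n$ is URGAS for the hybrid system (2.2) with $\varphi(x):=\min\{\bar\varphi(x),r\}$ and $F(h,x):=f(Y)$, where $Y$ is the solution of $Y=x+hf(Y)$ (implicit Euler method).
   Context: The hybrid system (2.2): for each locally bounded $u:\mathbb{R}^+\to\mathbb{R}^+$ and $x_0$, $\tau_0=0$, $x(0)=x_0$, $h_i=\varphi(x(\tau_i))\exp(-u(\tau_i))$, $\tau_{i+1}=\tau_i+h_i$, $x(t)=x(\tau_i)+(t-\tau_i)F(h_i,x(\tau_i))$ on $[\tau_i,\tau_{i+1}]$; solution $x(t,x_0;u)$. URGAS: (a) for every $\varepsilon>0$ there is $\delta>0$ with $|x_0|<\delta\Rightarrow|x(t,x_0;u)|<\varepsilon$ for all $t\ge0$ and all $u$; (b) for every $R$, $\sup\{|x(t,x_0;u)|:t\ge0,|x_0|\le R,u\}<\infty$; (c) for all $\varepsilon,R$ there is $T$ with $|x(t,x_0;u)|\le\varepsilon$ for $t\ge T$, $|x_0|\le R$, all locally bounded $u\ge0$. A Lyapunov function for $\dot z=f(z)$ is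 a positive definite, radially unbounded $C^1$ function $V$ with $\nabla V(x)f(x)<0$ for $x\ne0$. *)

From Stdlib Require Import Reals Lra.
From Stdlib Require Fin.
Open Scope R_scope.

Definition vec (n : nat) := Fin.t n -> R.

Fixpoint fsum (n : nat) : (Fin.t n -> R) -> R :=
  match n with
  | O => fun _ => 0
  | S m => fun u => u Fin.F1 + fsum m (fun i => u (Fin.FS i))
  end.

Definition vzero {n} : vec n := fun _ => 0.
Definition vadd {n} (x y : vec n) : vec n := fun i => x i + y i.
Definition vsub {n} (x y : vec n) : vec n := fun i => x i - y i.
Definition vscale {n} (a : R) (x : vec n) : vec n := fun i => a * x i.
Definition dot {n} (x y : vec n) : R := fsum n (fun i => x i * y i).
Definition vnorm {n} (x : vec n) : R := sqrt (dot x x).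

Definition locally_lipschitz {n} (f : vec n -> vec n) : Prop :=
  forall x, exists delta L, 0 < delta /\
    forall y z, vnorm (vsub y x) < delta -> vnorm (vsub z x) < delta ->
      vnorm (vsub (f y) (f z)) <= L * vnorm (vsub y z).

Definition continuous_vec_R {n} (g : vec n -> R) : Prop :=
  forall x eps, 0 < eps -> exists delta, 0 < delta /\
    forall y, vnorm (vsub y x) < delta -> Rabs (g y - g x) < eps.

Definition continuous_vec_vec {n} (g : vec n -> vec n) : Prop :=
  forall x eps, 0 < eps -> exists delta, 0 < delta /\
    forall y, vnorm (vsub y x) < delta -> vnorm (vsub (g y) (g x)) < eps.

Definition has_gradient {n} (V : vec n -> R) (gV : vec n -> vec n) : Prop :=
  forall x eps, 0 < eps -> exists delta, 0 < delta /\
    forall h, vnorm h < delta ->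
      Rabs (V (vadd x h) - V x - dot (gV x) h) <= eps * vnorm h.

Definition C1_with_gradient {n} (V : vec n -> R) (gV : vec n -> vec n) : Prop :=
  has_gradient V gV /\ continuous_vec_vec gV.

Definition lyapunov_function {n} (f : vec n -> vec n) (V : vec n -> R) : Prop :=
  (forall x, 0 <= V x) /\
  V vzero = 0 /\ (forall x, x <> vzero -> 0 < V x) /\
  (forall M, exists Rr, forall x, Rr <= vnorm x -> M <= V x) /\
  exists gV, C1_with_gradient V gV /\
    forall x, x <> vzero -> dot (gV x) (f x) < 0.

Definition convex_fun {n} (V : vec n -> R) : Prop :=
  forall x y lam, 0 <= lam <= 1 ->
    V (vadd (vscale lam x) (vscale (1 - lam) y)) <= lam * V x + (1 - lam) * V y.

(* Hybrid system (2.2): nodes (x(tau_i), tau_i). *)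
Fixpoint node {n} (phi : vec n -> R) (F : R -> vec n -> vec n) (u : R -> R)
  (x0 : vec n) (i : nat) : vec n * R :=
  match i with
  | O => (x0, 0)
  | S k => let (x, tau) := node phi F u x0 k in
           let h := phi x * exp (- u tau) in
           (vadd x (vscale h (F h x)), tau + h)
  end.

(* sol_at phi F u x0 t y : the solution x(t, x0; u) of (2.2) is defined at
   time t and equals y, i.e. t lies in some [tau_i, tau_{i+1}] and
   y = x(tau_i) + (t - tau_i) F(h_i, x(tau_i)). *)
Definition sol_at {n} (phi : vec n -> R) (F : R -> vec n -> vec n) (u : R -> R)
  (x0 : vec n) (t : R) (y : vec n) : Prop :=
  exists i, let (x, tau) := node phi F u x0 i in
    let h := phi x * exp (- u tau) in
    tau <= t <= tau + h /\ y = vadd x (vscale (t - tau) (F h x)).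

Definition admissible_input (u : R -> R) : Prop :=
  (forall t, 0 <= t -> 0 <= u t) /\
  (forall T, 0 <= T -> exists M, forall t, 0 <= t <= T -> u t <= M).

Definition URGAS {n} (phi : vec n -> R) (F : R -> vec n -> vec n) : Prop :=
  (forall eps, 0 < eps -> exists delta, 0 < delta /\
     forall x0 u t y, admissible_input u -> vnorm x0 < delta -> 0 <= t ->
       sol_at phi F u x0 t y -> vnorm y < eps) /\
  (forall Rr, exists M, forall x0 u t y, admissible_input u -> vnorm x0 <= Rr ->
       0 <= t -> sol_at phi F u x0 t y -> vnorm y <= M) /\
  (forall eps Rr, 0 < eps -> exists T, forall x0 u t y, admissible_input u ->
       vnorm x0 <= Rr -> T <= t -> sol_at phi F u x0 t y -> vnorm y <= eps).

(* Let c(z) = - grad V(z) . f(z), a continuous decay rate, positive off 0.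
   If Y = x + h f(Y), the tangent-plane inequality of the convex V at Y gives
   V(Y) <= V(x) - h c(Y), so every step decreases V, and by convexity V also stays
   below V(x) on the segment [x, Y] along which (2.2) interpolates the step.  An
   abstract discrete Lyapunov argument then yields URGAS: V is nonincreasing along
   solutions (stability and boundedness), and on the compact strip {m <= V <= B}
   the rate c is bounded below by some c0 > 0, so V falls below m by time B/c0 + r
   (uniform attractivity). *)

From Stdlib Require Import Reals Lra Lia Psatz Classical FunctionalExtensionality ClassicalEpsilon.
Open Scope R_scope.

Ltac vec_ext :=
  apply functional_extensionality; intros ?; unfold vadd, vsub, vscale, vzero; ring.

Lemma fsum_ext n (u v : Fin.t n -> R) : (forall i, u i = v i) -> fsum n u = fsum n v.
Proof. intros H. f_equal. apply functional_extensionality. exact H. Qed.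

Lemma fsum_add n (u v : Fin.t n -> R) :
  fsum n (fun i => u i + v i) = fsum n u + fsum n v.
Proof.
  induction n as [|n IH]; simpl; [lra|].
  rewrite (IH (fun i => u (Fin.FS i)) (fun i => v (Fin.FS i))). ring.
Qed.

Lemma fsum_scal n a (u : Fin.t n -> R) : fsum n (fun i => a * u i) = a * fsum n u.
Proof.
  induction n as [|n IH]; simpl; [lra|].
  rewrite (IH (fun i => u (Fin.FS i))). ring.
Qed.

Lemma fsum_nonneg n (u : Fin.t n -> R) : (forall i, 0 <= u i) -> 0 <= fsum n u.
Proof.
  induction n as [|n IH]; simpl; intros Hu; [lra|].
  pose proof (Hu Fin.F1). pose proof (IH (fun i => u (Fin.FS i)) (fun i => Hu _)). lra.
Qed.

Lemma fsum_ge_term n (j : Fin.t n) (u : Fin.t n -> R) :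
  (forall i, 0 <= u i) -> u j <= fsum n u.
Proof.
  induction j as [m|m j IH]; intros Hu; simpl.
  - pose proof (fsum_nonneg m (fun i => u (Fin.FS i)) (fun i => Hu _)). lra.
  - pose proof (Hu Fin.F1). pose proof (IH (fun i => u (Fin.FS i)) (fun i => Hu _)). lra.
Qed.

Lemma dot_comm n (a b : vec n) : dot a b = dot b a.
Proof. apply fsum_ext. intros; ring. Qed.

Lemma dot_self_nonneg n (a : vec n) : 0 <= dot a a.
Proof. apply fsum_nonneg. intros; nra. Qed.

Lemma dot_add_r n (a b c : vec n) : dot a (vadd b c) = dot a b + dot a c.
Proof. unfold dot, vadd. rewrite <- fsum_add. apply fsum_ext. intros; ring. Qed.

Lemma dot_scale_r n s (a b : vec n) : dot a (vscale s b) = s * dot a b.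
Proof. unfold dot, vscale. rewrite <- fsum_scal. apply fsum_ext. intros; ring. Qed.

Lemma dot_sub_r n (a b c : vec n) : dot a (vsub b c) = dot a b - dot a c.
Proof.
  replace (vsub b c) with (vadd b (vscale (-1) c)) by vec_ext.
  rewrite dot_add_r, dot_scale_r. ring.
Qed.

Lemma dot_zero_r n (a : vec n) : dot a vzero = 0.
Proof. replace (@vzero n) with (vscale 0 a) by vec_ext. rewrite dot_scale_r. ring. Qed.

(** Cauchy–Schwarz in squared form, by induction on the dimension: the
    inductive step is the two-dimensional inequality for the first coordinate
    and the tail. *)
Lemma cauchy_schwarz_sq n (a b : vec n) : dot a b * dot a b <= dot a a * dot b b.
Proof.
  induction n as [|n IH]; unfold dot; simpl; [lra|].
  specialize (IH (fun i => a (Fin.FS i)) (fun i => b (Fin.FS i))). unfold dot in IH.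
  set (s := fsum n (fun i => a (Fin.FS i) * b (Fin.FS i))) in *.
  set (A := fsum n (fun i => a (Fin.FS i) * a (Fin.FS i))) in *.
  set (B := fsum n (fun i => b (Fin.FS i) * b (Fin.FS i))) in *.
  assert (HA : 0 <= A) by (apply fsum_nonneg; intros; nra).
  assert (HB : 0 <= B) by (apply fsum_nonneg; intros; nra).
  set (a1 := a Fin.F1). set (b1 := b Fin.F1).
  (* the cross term 2 a1 b1 s is dominated by a1^2 B + A b1^2 *)
  set (p := a1 * a1 * B + A * b1 * b1). set (q := 2 * a1 * b1 * s).
  assert (Hp : 0 <= p) by (unfold p; nra).
  assert (Hpq : q * q <= p * p).
  { unfold p, q.
    pose proof (Rle_0_sqr (a1 * a1 * B - A * b1 * b1)).
    assert (0 <= (a1 * b1) * (a1 * b1) * (A * B - s * s))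
      by (apply Rmult_le_pos; [apply (Rle_0_sqr (a1 * b1)) | lra]).
    unfold Rsqr in *. nra. }
  assert (q <= p) by nra. unfold p, q in *. nra.
Qed.

Lemma vnorm_nonneg n (a : vec n) : 0 <= vnorm a.
Proof. apply sqrt_pos. Qed.

Lemma vnorm_sq n (a : vec n) : vnorm a * vnorm a = dot a a.
Proof. apply sqrt_sqrt, dot_self_nonneg. Qed.

Lemma Rabs_le_of_sq x y : 0 <= y -> x * x <= y * y -> Rabs x <= y.
Proof.
  intros Hy H. apply Rnot_lt_le. intros Hlt.
  assert (Rabs x * Rabs x = x * x) by (rewrite <- Rabs_mult; apply Rabs_right; nra).
  nra.
Qed.

Lemma sqrt_le_of_sq x y : 0 <= y -> x <= y * y -> sqrt x <= y.
Proof. intros Hy H. rewrite <- (sqrt_square y Hy). apply sqrt_le_1_alt. exact H. Qed.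

Lemma cauchy_schwarz n (a b : vec n) : Rabs (dot a b) <= vnorm a * vnorm b.
Proof.
  apply Rabs_le_of_sq; [apply Rmult_le_pos; apply vnorm_nonneg|].
  replace (vnorm a * vnorm b * (vnorm a * vnorm b))
    with (vnorm a * vnorm a * (vnorm b * vnorm b)) by ring.
  rewrite !vnorm_sq. apply cauchy_schwarz_sq.
Qed.

Lemma coord_le_vnorm n (a : vec n) i : Rabs (a i) <= vnorm a.
Proof.
  apply Rabs_le_of_sq; [apply vnorm_nonneg|]. rewrite vnorm_sq.
  apply (fsum_ge_term n i (fun i => a i * a i)). intros; nra.
Qed.

Lemma vnorm_scale n s (a : vec n) : vnorm (vscale s a) = Rabs s * vnorm a.
Proof.
  unfold vnorm. rewrite dot_scale_r, dot_comm, dot_scale_r.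
  rewrite <- Rmult_assoc, sqrt_mult by (nra || apply dot_self_nonneg).
  rewrite <- (sqrt_Rsqr_abs s). reflexivity.
Qed.

Lemma vnorm_zero n : vnorm (@vzero n) = 0.
Proof. unfold vnorm. rewrite dot_zero_r. apply sqrt_0. Qed.

Lemma vnorm_triangle n (a b : vec n) : vnorm (vadd a b) <= vnorm a + vnorm b.
Proof.
  pose proof (vnorm_nonneg n a). pose proof (vnorm_nonneg n b).
  apply sqrt_le_of_sq; [lra|].
  rewrite dot_add_r, (dot_comm _ (vadd a b)), (dot_comm _ (vadd a b)), !dot_add_r.
  rewrite (dot_comm _ b a).
  pose proof (cauchy_schwarz n a b). pose proof (Rle_abs (dot a b)).
  pose proof (vnorm_sq n a). pose proof (vnorm_sq n b). nra.
Qed.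

Lemma vnorm_sub_comm n (a b : vec n) : vnorm (vsub a b) = vnorm (vsub b a).
Proof.
  replace (vsub b a) with (vscale (-1) (vsub a b)) by vec_ext.
  rewrite vnorm_scale, Rabs_left by lra. ring.
Qed.

Lemma vnorm_reverse_triangle n (a b : vec n) :
  Rabs (vnorm a - vnorm b) <= vnorm (vsub a b).
Proof.
  pose proof (vnorm_triangle n (vsub a b) b) as Ha.
  pose proof (vnorm_triangle n (vsub b a) a) as Hb.
  replace (vadd (vsub a b) b) with a in Ha by vec_ext.
  replace (vadd (vsub b a) a) with b in Hb by vec_ext.
  rewrite vnorm_sub_comm in Hb. apply Rabs_le. lra.
Qed.

Lemma vnorm_cons m (z : vec (S m)) :
  vnorm z <= Rabs (z Fin.F1) + vnorm (fun i => z (Fin.FS i)).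
Proof.
  pose proof (Rabs_pos (z Fin.F1)). pose proof (vnorm_nonneg m (fun i => z (Fin.FS i))).
  apply sqrt_le_of_sq; [lra|].
  pose proof (vnorm_sq m (fun i => z (Fin.FS i))). unfold dot in * |- *. simpl.
  assert (Rabs (z Fin.F1) * Rabs (z Fin.F1) = z Fin.F1 * z Fin.F1)
    by (rewrite <- Rabs_mult; apply Rabs_right; nra).
  nra.
Qed.

Lemma inv_succ_small eps : 0 < eps -> exists N, forall j, (N <= j)%nat -> / INR (S j) < eps.
Proof.
  intros He. destruct (archimed_cor1 eps He) as [N [HN HN0]]. exists N. intros j Hj.
  eapply Rle_lt_trans; [|exact HN].
  apply Rinv_le_contravar; [apply lt_0_INR; exact HN0|]. apply le_INR. lia.
Qed.

Definition strictly_increasing (s : nat -> nat) : Prop := forall j, (s j < s (S j))%nat.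

Lemma strictly_increasing_ge s : strictly_increasing s -> forall j, (j <= s j)%nat.
Proof. intros Hs j. induction j; [lia|]. specialize (Hs j). lia. Qed.

Lemma strictly_increasing_mono s :
  strictly_increasing s -> forall i j, (i <= j)%nat -> (s i <= s j)%nat.
Proof. intros Hs i j Hij. induction Hij; [lia|]. specialize (Hs m). lia. Qed.

Lemma strictly_increasing_comp s1 s2 :
  strictly_increasing s1 -> strictly_increasing s2 ->
  strictly_increasing (fun j => s1 (s2 j)).
Proof.
  intros H1 H2 j. pose proof (strictly_increasing_mono s1 H1 _ _ (H2 j)).
  specialize (H1 (s2 j)). lia.
Qed.

Lemma Un_cv_subsequence u l s :
  Un_cv u l -> strictly_increasing s -> Un_cv (fun j => u (s j)) l.
Proof.
  intros Hu Hs eps He. destruct (Hu eps He) as [N HN]. exists N. intros j Hj.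
  apply HN. pose proof (strictly_increasing_ge s Hs j). lia.
Qed.

(** Recursive extraction of indices: [g (N, j)] is an index beyond [N] at
    precision [j]; each extracted index lies beyond the previous one. *)
Fixpoint extract (g : nat * nat -> nat) (j : nat) : nat :=
  match j with
  | O => g (O, O)
  | S j' => g (S (extract g j'), S j')
  end.

Lemma cluster_value_subsequence (u : nat -> R) l :
  ValAdh u l -> exists s, strictly_increasing s /\ Un_cv (fun j => u (s j)) l.
Proof.
  intros Hl.
  assert (Hpick : forall Nj : nat * nat,
            exists p, (fst Nj <= p)%nat /\ Rabs (u p - l) < / INR (S (snd Nj))).
  { intros [N j]. assert (Hj : 0 < / INR (S j)) by (apply Rinv_0_lt_compat, lt_0_INR; lia).
    apply (Hl (disc l (mkposreal _ Hj)) N). exists (mkposreal _ Hj). intros y Hy; exact Hy. }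
  destruct (choice _ Hpick) as [g Hg].
  assert (Hclose : forall j, Rabs (u (extract g j) - l) < / INR (S j))
    by (intros [|j]; apply Hg).
  exists (extract g). split.
  - intros j. apply (Hg (S (extract g j), S j)).
  - intros eps He. destruct (inv_succ_small eps He) as [N HN]. exists N. intros j Hj.
    specialize (HN j Hj). specialize (Hclose j). unfold Rdist. lra.
Qed.

Lemma bounded_real_subsequence (u : nat -> R) K :
  (forall k, Rabs (u k) <= K) ->
  exists s l, strictly_increasing s /\ Un_cv (fun j => u (s j)) l.
Proof.
  intros Hu.
  destruct (Bolzano_Weierstrass u (fun c => -K <= c <= K) (compact_P3 (-K) K)) as [l Hl].
  { intros k. specialize (Hu k). pose proof (Rle_abs (u k)). pose proof (Rle_abs (- u k)).
    rewrite Rabs_Ropp in *. lra. }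
  destruct (cluster_value_subsequence u l Hl) as [s Hs]. exists s, l. exact Hs.
Qed.

Definition vconverges {n} (z : nat -> vec n) (zs : vec n) : Prop :=
  forall eps, 0 < eps -> exists N, forall j, (N <= j)%nat -> vnorm (vsub (z j) zs) < eps.

(** Bolzano–Weierstrass in [R^n], by induction on the dimension: extract a
    subsequence along which the first coordinate converges, then one along
    which the tail converges. *)
Lemma bounded_vec_subsequence n (z : nat -> vec n) K :
  (forall k i, Rabs (z k i) <= K) ->
  exists s zs, strictly_increasing s /\ vconverges (fun j => z (s j)) zs.
Proof.
  revert z. induction n as [|m IH]; intros z Hz.
  - exists (fun j => j), vzero. split; [intros j; lia|].
    intros eps He. exists O. intros j _. unfold vnorm, dot. simpl. rewrite sqrt_0. exact He.
  - destruct (bounded_real_subsequence (fun k => z k Fin.F1) K) as [s1 [a [Hs1 Ha]]].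
    { intros k. apply Hz. }
    destruct (IH (fun k i => z (s1 k) (Fin.FS i))) as [s2 [w [Hs2 Hw]]].
    { intros k i. apply Hz. }
    exists (fun j => s1 (s2 j)), (fun i => Fin.caseS' i (fun _ => R) a w). split.
    + apply strictly_increasing_comp; assumption.
    + intros eps He.
      destruct (Un_cv_subsequence _ _ _ Ha Hs2 (eps / 2)) as [N1 HN1]; [lra|].
      destruct (Hw (eps / 2)) as [N2 HN2]; [lra|].
      exists (Nat.max N1 N2). intros j Hj.
      eapply Rle_lt_trans; [apply vnorm_cons|].
      specialize (HN1 j ltac:(lia)). specialize (HN2 j ltac:(lia)).
      unfold Rdist in HN1.
      change (Rabs (z (s1 (s2 j)) Fin.F1 - a)
              + vnorm (vsub (fun i => z (s1 (s2 j)) (Fin.FS i)) w) < eps).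
      lra.
Qed.

Definition vbounded {n} (P : vec n -> Prop) : Prop :=
  exists K, forall z, P z -> vnorm z <= K.

Definition vclosed {n} (P : vec n -> Prop) : Prop :=
  forall zs, (forall d, 0 < d -> exists z, P z /\ vnorm (vsub z zs) < d) -> P zs.

Lemma closed_bounded_cluster n (P : vec n -> Prop) (g : vec n -> R) (z : nat -> vec n) :
  vbounded P -> vclosed P -> continuous_vec_R g -> (forall k, P (z k)) ->
  exists zs, P zs /\ forall eps, 0 < eps -> forall N,
    exists k, (N <= k)%nat /\ Rabs (g (z k) - g zs) < eps.
Proof.
  intros [K HK] HP Hg Hz.
  destruct (bounded_vec_subsequence n z K) as [s [zs [Hs Hconv]]].
  { intros k i. eapply Rle_trans; [apply coord_le_vnorm | apply HK, Hz]. }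
  exists zs. split.
  - apply HP. intros d Hd. destruct (Hconv d Hd) as [N HN].
    exists (z (s N)). split; [apply Hz | apply HN; lia].
  - intros eps He N. destruct (Hg zs eps He) as [d [Hd Hgd]]. destruct (Hconv d Hd) as [N' HN'].
    exists (s (Nat.max N N')). split.
    + pose proof (strictly_increasing_ge s Hs (Nat.max N N')). lia.
    + apply Hgd, HN'. lia.
Qed.

Lemma continuous_pos_lower_bound n (P : vec n -> Prop) (g : vec n -> R) :
  vbounded P -> vclosed P -> continuous_vec_R g -> (forall z, P z -> 0 < g z) ->
  exists c, 0 < c /\ forall z, P z -> c <= g z.
Proof.
  intros Hb Hc Hg Hpos. apply NNPP. intros Hno.
  assert (Hk : forall k, exists z, P z /\ g z < / INR (S k)).
  { intros k. apply NNPP. intros Hno_k. apply Hno. exists (/ INR (S k)). split.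
    - apply Rinv_0_lt_compat, lt_0_INR. lia.
    - intros z Pz. apply Rnot_lt_le. intros Hlt. apply Hno_k. exists z. auto. }
  destruct (choice _ Hk) as [z Hz].
  destruct (closed_bounded_cluster n P g z Hb Hc Hg) as [zs [Pzs Hcl]]; [apply Hz|].
  pose proof (Hpos zs Pzs).
  destruct (inv_succ_small (g zs / 2)) as [N HN]; [lra|].
  destruct (Hcl (g zs / 2) ltac:(lra) N) as [k [Hk1 Hk2]].
  specialize (HN k Hk1). destruct (Hz k) as [_ Hzk]. apply Rabs_def2 in Hk2. lra.
Qed.

Lemma continuous_upper_bound n (P : vec n -> Prop) (g : vec n -> R) :
  vbounded P -> vclosed P -> continuous_vec_R g -> exists M, forall z, P z -> g z <= M.
Proof.
  intros Hb Hc Hg. apply NNPP. intros Hno.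
  assert (Hk : forall k, exists z, P z /\ INR k < g z).
  { intros k. apply NNPP. intros Hno_k. apply Hno. exists (INR k).
    intros z Pz. apply Rnot_lt_le. intros Hlt. apply Hno_k. exists z. auto. }
  destruct (choice _ Hk) as [z Hz].
  destruct (closed_bounded_cluster n P g z Hb Hc Hg) as [zs [Pzs Hcl]]; [apply Hz|].
  destruct (INR_unbounded (g zs + 1)) as [N HN].
  destruct (Hcl 1 ltac:(lra) N) as [k [Hk1 Hk2]].
  assert (INR N <= INR k) by (apply le_INR; exact Hk1).
  destruct (Hz k) as [_ Hzk]. apply Rabs_def2 in Hk2. lra.
Qed.

Lemma small_times_bounded K eps h :
  0 <= K -> 0 < eps -> 0 <= h -> h <= eps / (K + 1) -> h * K < eps.
Proof.
  intros HK He Hh Hle. apply (Rmult_le_compat_r (K + 1)) in Hle; [|lra].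
  unfold Rdiv in Hle. rewrite Rmult_assoc, Rinv_l in Hle by lra. nra.
Qed.

Lemma vsub_zero_r n (x : vec n) : vsub x vzero = x.
Proof. vec_ext. Qed.

Lemma vnorm_continuous n : continuous_vec_R (@vnorm n).
Proof.
  intros x eps He. exists eps. split; [exact He|]. intros y Hy.
  eapply Rle_lt_trans; [apply vnorm_reverse_triangle | exact Hy].
Qed.

Lemma closed_preimage_interval n (g : vec n -> R) a b :
  continuous_vec_R g -> vclosed (fun z => a <= g z <= b).
Proof.
  intros Hg zs Hzs.
  split; apply Rnot_lt_le; intros Hlt;
    [destruct (Hg zs (a - g zs)) as [d [Hd Hclose]] | destruct (Hg zs (g zs - b)) as [d [Hd Hclose]]];
    try lra; destruct (Hzs d Hd) as [z [Hz Hzd]]; specialize (Hclose z Hzd);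
    apply Rabs_def2 in Hclose; lra.
Qed.

Lemma continuous_opp n (g : vec n -> R) :
  continuous_vec_R g -> continuous_vec_R (fun z => - g z).
Proof.
  intros Hg x eps He. destruct (Hg x eps He) as [d [Hd Hgd]]. exists d. split; [exact Hd|].
  intros y Hy. replace (- g y - - g x) with (- (g y - g x)) by ring.
  rewrite Rabs_Ropp. apply Hgd, Hy.
Qed.

Lemma gradient_continuous n (V : vec n -> R) gV : has_gradient V gV -> continuous_vec_R V.
Proof.
  intros Hg x eps He. destruct (Hg x 1 Rlt_0_1) as [d [Hd Hrem]].
  set (G := vnorm (gV x) + 1). assert (HG : 0 <= G) by (pose proof (vnorm_nonneg n (gV x)); unfold G; lra).
  exists (Rmin d (eps / (G + 1))). split; [apply Rmin_pos; [lra | apply Rdiv_lt_0_compat; lra]|].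
  intros y Hy. pose proof (Rmin_l d (eps / (G + 1))). pose proof (Rmin_r d (eps / (G + 1))).
  set (h := vsub y x) in *. pose proof (vnorm_nonneg n h).
  specialize (Hrem h ltac:(lra)). replace (vadd x h) with y in Hrem by (unfold h; vec_ext).
  pose proof (cauchy_schwarz n (gV x) h).
  pose proof (small_times_bounded G eps (vnorm h) HG He ltac:(lra) ltac:(lra)).
  pose proof (Rabs_triang (V y - V x - dot (gV x) h) (dot (gV x) h)).
  replace (V y - V x - dot (gV x) h + dot (gV x) h) with (V y - V x) in * by ring.
  unfold G in *. nra.
Qed.

Lemma lipschitz_continuous n (f : vec n -> vec n) : locally_lipschitz f -> continuous_vec_vec f.
Proof.
  intros Hf x eps He. destruct (Hf x) as [d [L [Hd HL]]].
  set (K := Rabs L). assert (HK : 0 <= K) by apply Rabs_pos.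
  exists (Rmin d (eps / (K + 1))). split; [apply Rmin_pos; [lra | apply Rdiv_lt_0_compat; lra]|].
  intros y Hy. pose proof (Rmin_l d (eps / (K + 1))). pose proof (Rmin_r d (eps / (K + 1))).
  assert (Hxx : vnorm (vsub x x) < d) by (replace (vsub x x) with (@vzero n) by vec_ext;
                                          rewrite vnorm_zero; exact Hd).
  specialize (HL y x ltac:(lra) Hxx).
  pose proof (Rle_abs L). pose proof (vnorm_nonneg n (vsub y x)).
  pose proof (small_times_bounded K eps (vnorm (vsub y x)) HK He ltac:(lra) ltac:(lra)).
  unfold K in *. nra.
Qed.

Lemma dot_continuous n (a b : vec n -> vec n) :
  continuous_vec_vec a -> continuous_vec_vec b -> continuous_vec_R (fun z => dot (a z) (b z)).
Proof.
  intros Ha Hb x eps He.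
  set (A := vnorm (a x)). set (B := vnorm (b x)).
  assert (HA : 0 <= A) by apply vnorm_nonneg. assert (HB : 0 <= B) by apply vnorm_nonneg.
  set (eta := Rmin 1 (eps / (A + B + 1 + 1))).
  assert (Heta : 0 < eta) by (apply Rmin_pos; [lra | apply Rdiv_lt_0_compat; lra]).
  assert (Heta1 : eta <= 1) by apply Rmin_l.
  assert (Hsmall : eta * (A + B + 1) < eps)
    by (apply small_times_bounded; [lra | exact He | lra | apply Rmin_r]).
  destruct (Ha x eta Heta) as [da [Hda Ha']]. destruct (Hb x eta Heta) as [db [Hdb Hb']].
  exists (Rmin da db). split; [apply Rmin_pos; lra|].
  intros y Hy. pose proof (Rmin_l da db). pose proof (Rmin_r da db).
  specialize (Ha' y ltac:(lra)). specialize (Hb' y ltac:(lra)).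
  replace (dot (a y) (b y) - dot (a x) (b x))
    with (dot (b y) (vsub (a y) (a x)) + dot (a x) (vsub (b y) (b x)))
    by (rewrite !dot_sub_r, (dot_comm _ (b y) (a y)), (dot_comm _ (b y) (a x)); ring).
  assert (Hby : vnorm (b y) <= B + eta).
  { pose proof (vnorm_reverse_triangle n (b y) (b x)).
    pose proof (Rle_abs (vnorm (b y) - vnorm (b x))). unfold B. lra. }
  pose proof (cauchy_schwarz n (b y) (vsub (a y) (a x))).
  pose proof (cauchy_schwarz n (a x) (vsub (b y) (b x))) as Hcs. fold A in Hcs.
  pose proof (vnorm_nonneg n (vsub (a y) (a x))). pose proof (vnorm_nonneg n (vsub (b y) (b x))).
  pose proof (vnorm_nonneg n (b y)).
  assert (vnorm (b y) * vnorm (vsub (a y) (a x)) <= (B + eta) * eta)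
    by (apply Rmult_le_compat; lra).
  assert (A * vnorm (vsub (b y) (b x)) <= A * eta) by (apply Rmult_le_compat_l; lra).
  eapply Rle_lt_trans; [apply Rabs_triang|]. nra.
Qed.

Lemma convex_gradient_inequality n (V : vec n -> R) gV :
  convex_fun V -> has_gradient V gV -> forall a b, V a + dot (gV a) (vsub b a) <= V b.
Proof.
  intros Hconv Hg a b. set (d := vsub b a). set (D := vnorm d).
  assert (HD : 0 <= D) by apply vnorm_nonneg.
  (* for every e > 0, a difference quotient along d at a small step lam
     gives the inequality up to e * D *)
  assert (Happrox : forall e, 0 < e -> dot (gV a) d <= V b - V a + e * D).
  { intros e He. destruct (Hg a e He) as [delta [Hdelta Hrem]].
    set (lam := delta / (D + delta)).
    assert (Hlam : lam * D + lam * delta = delta) by (unfold lam; field; lra).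
    assert (Hlam0 : 0 < lam) by (apply Rdiv_lt_0_compat; lra).
    assert (Hlam1 : lam <= 1) by nra.
    assert (Hlamdelta : 0 < lam * delta) by (apply Rmult_lt_0_compat; lra).
    specialize (Hrem (vscale lam d)).
    rewrite vnorm_scale, Rabs_right, dot_scale_r in Hrem by lra. fold D in Hrem.
    specialize (Hrem ltac:(lra)).
    replace (vadd a (vscale lam d)) with (vadd (vscale lam b) (vscale (1 - lam) a))
      in Hrem by (unfold d; vec_ext).
    pose proof (Hconv b a lam ltac:(lra)).
    pose proof (Rle_abs (- (V (vadd (vscale lam b) (vscale (1 - lam) a)) - V a
                           - lam * dot (gV a) d))).
    rewrite Rabs_Ropp in *.
    apply (Rmult_le_reg_l lam); [exact Hlam0|]. nra. }
  cut (dot (gV a) d <= V b - V a); [lra|].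
  apply Rle_plus_epsilon. intros eps Heps.
  pose proof (Happrox (eps / (D + 1)) ltac:(apply Rdiv_lt_0_compat; lra)).
  pose proof (small_times_bounded D eps (eps / (D + 1)) HD Heps
                ltac:(apply Rlt_le, Rdiv_lt_0_compat; lra) (Rle_refl _)).
  lra.
Qed.

Lemma implicit_euler_decrease n (f : vec n -> vec n) (V : vec n -> R) gV x h Y :
  convex_fun V -> has_gradient V gV -> Y = vadd x (vscale h (f Y)) ->
  V Y <= V x + h * dot (gV Y) (f Y).
Proof.
  intros Hconv Hg HY. pose proof (convex_gradient_inequality n V gV Hconv Hg Y x) as Hsupp.
  replace (vsub x Y) with (vscale (- h) (f Y)) in Hsupp
    by (apply functional_extensionality; intros i;
        pose proof (f_equal (fun v => v i) HY) as Hi; unfold vadd, vscale in Hi;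
        unfold vsub, vscale; lra).
  rewrite dot_scale_r in Hsupp. lra.
Qed.

Lemma implicit_euler_segment n (f : vec n -> vec n) (V : vec n -> R) x h s Y :
  convex_fun V -> 0 < h -> 0 <= s <= h -> Y = vadd x (vscale h (f Y)) -> V Y <= V x ->
  V (vadd x (vscale s (f Y))) <= V x.
Proof.
  intros Hconv Hh Hs HY HYx. set (lam := s / h).
  assert (Hlam : lam * h = s) by (unfold lam; field; lra).
  assert (Hlam01 : 0 <= lam <= 1) by nra.
  replace (vadd x (vscale s (f Y))) with (vadd (vscale lam Y) (vscale (1 - lam) x))
    by (apply functional_extensionality; intros i;
        pose proof (f_equal (fun v => v i) HY) as Hi; unfold vadd, vscale in Hi |- *;
        rewrite Hi, <- Hlam; ring).
  pose proof (Hconv Y x lam Hlam01). nra.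
Qed.

Section HybridNodes.
Variables (n : nat) (phi : vec n -> R) (F : R -> vec n -> vec n) (u : R -> R) (x0 : vec n).

Definition node_pt (i : nat) : vec n := fst (node phi F u x0 i).
Definition node_time (i : nat) : R := snd (node phi F u x0 i).
Definition node_step (i : nat) : R := phi (node_pt i) * exp (- u (node_time i)).

Lemma node_pt_0 : node_pt 0 = x0.
Proof. reflexivity. Qed.

Lemma node_time_0 : node_time 0 = 0.
Proof. reflexivity. Qed.

Lemma node_pt_S i :
  node_pt (S i) = vadd (node_pt i) (vscale (node_step i) (F (node_step i) (node_pt i))).
Proof. unfold node_step, node_time, node_pt. simpl. destruct (node phi F u x0 i). reflexivity. Qed.

Lemma node_time_S i : node_time (S i) = node_time i + node_step i.
Proof. unfold node_step, node_time, node_pt. simpl. destruct (node phi F u x0 i). reflexivity. Qed.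

Lemma sol_at_nodes t y :
  sol_at phi F u x0 t y ->
  exists i, node_time i <= t <= node_time i + node_step i /\
    y = vadd (node_pt i) (vscale (t - node_time i) (F (node_step i) (node_pt i))).
Proof.
  intros [i Hi]. exists i. unfold node_step, node_time, node_pt.
  destruct (node phi F u x0 i). exact Hi.
Qed.

End HybridNodes.

Arguments node_pt {n}.
Arguments node_time {n}.
Arguments node_step {n}.

(** A nonnegative input can only shorten the nominal step [phi x]. *)
Lemma exp_neg_le_1 x : 0 <= x -> exp (- x) <= 1.
Proof.
  intros Hx. rewrite <- exp_0. destruct Hx as [Hx | <-].
  - left. apply exp_increasing. lra.
  - rewrite Ropp_0. lra.
Qed.

Section DiscreteLyapunov.
Variables (n : nat) (phi : vec n -> R) (F : R -> vec n -> vec n) (V c : vec n -> R) (r : R).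

Hypothesis phi_pos : forall x, 0 < phi x.
Hypothesis phi_le_r : forall x, phi x <= r.
Hypothesis V_cont : continuous_vec_R V.
Hypothesis V_zero : V vzero = 0.
Hypothesis V_pos : forall x, x <> vzero -> 0 < V x.
Hypothesis V_radial : forall M, exists Rr, forall x, Rr <= vnorm x -> M <= V x.
Hypothesis c_cont : continuous_vec_R c.
Hypothesis c_nonneg : forall x, 0 <= c x.
Hypothesis c_pos : forall x, x <> vzero -> 0 < c x.
Hypothesis step_decrease : forall x h, 0 < h <= phi x ->
  V (vadd x (vscale h (F h x))) <= V x - h * c (vadd x (vscale h (F h x))).
Hypothesis segment_below : forall x h s, 0 < h <= phi x -> 0 <= s <= h ->
  V (vadd x (vscale s (F h x))) <= V x.

Section Trajectory.
Variables (u : R -> R) (x0 : vec n).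
Hypothesis u_nonneg : forall t, 0 <= t -> 0 <= u t.

Local Notation pt := (node_pt phi F u x0).
Local Notation time := (node_time phi F u x0).
Local Notation step := (node_step phi F u x0).

Lemma step_bounds_at x tau : 0 <= tau -> 0 < phi x * exp (- u tau) <= phi x.
Proof.
  intros Htau. pose proof (phi_pos x). pose proof (exp_pos (- u tau)).
  pose proof (exp_neg_le_1 (u tau) (u_nonneg tau Htau)). split; nra.
Qed.

Lemma node_time_nonneg i : 0 <= time i.
Proof.
  induction i as [|i IH]; [rewrite node_time_0; lra|].
  rewrite node_time_S. pose proof (step_bounds_at (pt i) _ IH). unfold node_step. lra.
Qed.

Lemma node_step_bounds i : 0 < step i <= phi (pt i).
Proof. apply step_bounds_at, node_time_nonneg. Qed.

Lemma V_node_decrease i : V (pt (S i)) <= V (pt i) - step i * c (pt (S i)).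
Proof. rewrite node_pt_S. apply step_decrease, node_step_bounds. Qed.

Lemma V_node_antitone i j : (i <= j)%nat -> V (pt j) <= V (pt i).
Proof.
  intros Hij. induction Hij as [|j _ IH]; [lra|].
  pose proof (V_node_decrease j). pose proof (node_step_bounds j).
  pose proof (c_nonneg (pt (S j))). nra.
Qed.

Lemma V_sol_below_node t y :
  sol_at phi F u x0 t y -> exists i, time i <= t <= time i + step i /\ V y <= V (pt i).
Proof.
  intros Hsol. destruct (sol_at_nodes _ _ _ _ _ _ _ Hsol) as [i [Ht ->]].
  exists i. split; [exact Ht|]. apply segment_below; [apply node_step_bounds | lra].
Qed.

Lemma V_sol_le_init t y : sol_at phi F u x0 t y -> V y <= V x0.
Proof.
  intros Hsol. destruct (V_sol_below_node t y Hsol) as [i [_ Hi]].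
  pose proof (V_node_antitone 0 i ltac:(lia)) as Hanti. rewrite node_pt_0 in Hanti. lra.
Qed.

Lemma V_node_dissipation m c0 i :
  (forall z, m <= V z <= V x0 -> c0 <= c z) -> m <= V (pt i) -> V (pt i) <= V x0 - time i * c0.
Proof.
  intros Hc0. induction i as [|i IH]; intros Hm.
  - rewrite node_time_0, node_pt_0. lra.
  - pose proof (V_node_decrease i). pose proof (node_step_bounds i).
    pose proof (c_nonneg (pt (S i))).
    assert (Hmi : m <= V (pt i)) by nra.
    pose proof (V_node_antitone 0 (S i) ltac:(lia)) as Hanti. rewrite node_pt_0 in Hanti.
    pose proof (Hc0 (pt (S i)) ltac:(lra)).
    rewrite node_time_S. specialize (IH Hmi). nra.
Qed.

End Trajectory.

Lemma V_lower_bound_outside_ball eps :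
  0 < eps -> exists m, 0 < m /\ forall z, eps <= vnorm z -> m <= V z.
Proof.
  intros Heps. destruct (V_radial 1) as [Rr HRr].
  destruct (continuous_pos_lower_bound n (fun z => eps <= vnorm z <= Rr) V)
    as [m [Hm HmV]].
  - exists Rr. intros z [_ Hz]. exact Hz.
  - apply closed_preimage_interval, vnorm_continuous.
  - exact V_cont.
  - intros z [Hz _]. apply V_pos. intros ->. rewrite vnorm_zero in Hz. lra.
  - exists (Rmin m 1). split; [apply Rmin_pos; lra|]. intros z Hz.
    pose proof (Rmin_l m 1). pose proof (Rmin_r m 1).
    destruct (Rle_or_lt (vnorm z) Rr) as [Hle | Hgt].
    + specialize (HmV z (conj Hz Hle)). lra.
    + specialize (HRr z (Rlt_le _ _ Hgt)). lra.
Qed.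

Lemma V_upper_bound_on_ball R0 : exists B, forall z, vnorm z <= R0 -> V z <= B.
Proof.
  destruct (continuous_upper_bound n (fun z => 0 <= vnorm z <= R0) V) as [B HB].
  - exists R0. intros z [_ Hz]. exact Hz.
  - apply closed_preimage_interval, vnorm_continuous.
  - exact V_cont.
  - exists B. intros z Hz. apply HB. split; [apply vnorm_nonneg | exact Hz].
Qed.

(** The decay rate [c] is bounded below on every sublevel strip [{m <= V <= B}]
    with [m > 0], which is compact by radial unboundedness. *)
Lemma c_lower_bound_on_strip m B :
  0 < m -> exists c0, 0 < c0 /\ forall z, m <= V z <= B -> c0 <= c z.
Proof.
  intros Hm. destruct (V_radial (B + 1)) as [R1 HR1].
  apply (continuous_pos_lower_bound n (fun z => m <= V z <= B) c).
  - exists R1. intros z Hz. apply Rnot_lt_le. intros Hgt. specialize (HR1 z (Rlt_le _ _ Hgt)). lra.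
  - apply closed_preimage_interval, V_cont.
  - exact c_cont.
  - intros z Hz. apply c_pos. intros ->. lra.
Qed.

(** Uniform stability: [V] is continuous at 0 and nonincreasing along solutions. *)
Lemma hybrid_stable : forall eps, 0 < eps -> exists delta, 0 < delta /\
  forall x0 u t y, admissible_input u -> vnorm x0 < delta -> 0 <= t ->
    sol_at phi F u x0 t y -> vnorm y < eps.
Proof.
  intros eps Heps. destruct (V_lower_bound_outside_ball eps Heps) as [m [Hm HmV]].
  destruct (V_cont vzero m Hm) as [delta [Hdelta Hclose]]. exists delta. split; [exact Hdelta|].
  intros x0 u t y [Hu _] Hx0 _ Hsol.
  rewrite V_zero in Hclose. specialize (Hclose x0 ltac:(rewrite vsub_zero_r; exact Hx0)).
  apply Rabs_def2 in Hclose. pose proof (V_sol_le_init u x0 Hu t y Hsol).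
  apply Rnot_le_lt. intros Hy. specialize (HmV y Hy). lra.
Qed.

(** Uniform boundedness: solutions stay in a sublevel set of the radially
    unbounded [V]. *)
Lemma hybrid_bounded : forall R0, exists M,
  forall x0 u t y, admissible_input u -> vnorm x0 <= R0 -> 0 <= t ->
    sol_at phi F u x0 t y -> vnorm y <= M.
Proof.
  intros R0. destruct (V_upper_bound_on_ball R0) as [B HB]. destruct (V_radial (B + 1)) as [R1 HR1].
  exists R1. intros x0 u t y [Hu _] Hx0 _ Hsol.
  pose proof (V_sol_le_init u x0 Hu t y Hsol). pose proof (HB x0 Hx0).
  apply Rnot_lt_le. intros Hy. specialize (HR1 y (Rlt_le _ _ Hy)). lra.
Qed.

(** Uniform attractivity: after time [B / c0 + r], the node preceding the
    current time has entered [{V < m}], hence so has the solution. *)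
Lemma hybrid_attractive : forall eps R0, 0 < eps -> exists T,
  forall x0 u t y, admissible_input u -> vnorm x0 <= R0 -> T <= t ->
    sol_at phi F u x0 t y -> vnorm y <= eps.
Proof.
  intros eps R0 Heps. destruct (V_lower_bound_outside_ball eps Heps) as [m [Hm HmV]].
  destruct (V_upper_bound_on_ball R0) as [B HB].
  destruct (c_lower_bound_on_strip m B Hm) as [c0 [Hc0 Hc0V]].
  exists (B / c0 + r). intros x0 u t y [Hu _] Hx0 Ht Hsol.
  pose proof (HB x0 Hx0) as HVx0.
  destruct (V_sol_below_node u x0 Hu t y Hsol) as [i [Hti Hyi]].
  pose proof (node_step_bounds u x0 Hu i). pose proof (phi_le_r (node_pt phi F u x0 i)).
  assert (Hnode : V (node_pt phi F u x0 i) < m).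
  { apply Rnot_le_lt. intros Hmi.
    pose proof (V_node_dissipation u x0 Hu m c0 i ltac:(intros z Hz; apply Hc0V; lra) Hmi).
    assert (B / c0 * c0 = B) by (field; lra).
    assert (B / c0 * c0 <= node_time phi F u x0 i * c0) by (apply Rmult_le_compat_r; lra).
    lra. }
  apply Rnot_lt_le. intros Hy. specialize (HmV y (Rlt_le _ _ Hy)). lra.
Qed.

Theorem discrete_lyapunov_URGAS : URGAS phi F.
Proof. split; [exact hybrid_stable | split; [exact hybrid_bounded | exact hybrid_attractive]]. Qed.

End DiscreteLyapunov.

Theorem theorem4p15 (n : nat) (f : vec n -> vec n) (V : vec n -> R)
  (phibar : vec n -> R) :
  locally_lipschitz f ->
  f vzero = vzero ->
  lyapunov_function f V ->
  convex_fun V ->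
  continuous_vec_R phibar ->
  (forall x, 0 < phibar x) ->
  (forall x h, 0 <= h <= phibar x ->
     exists Y, Y = vadd x (vscale h (f Y)) /\
       forall Y', Y' = vadd x (vscale h (f Y')) -> Y' = Y) ->
  forall (r : R), 0 < r ->
  forall (F : R -> vec n -> vec n),
    (forall x h, 0 <= h <= Rmin (phibar x) r ->
       exists Y, Y = vadd x (vscale h (f Y)) /\ F h x = f Y) ->
    URGAS (fun x => Rmin (phibar x) r) F.
Proof.
  intros Hlip Hf0 [_ [HV0 [HVpos [HVrad [gV [[Hgrad HgVc] Hdecay]]]]]] Hconv _ Hphibar _
    r Hr F HF.
  set (c := fun z => - dot (gV z) (f z)).
  assert (Hc_nonneg : forall z, 0 <= c z).
  { intros z. unfold c. destruct (classic (z = vzero)) as [-> | Hz].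
    - rewrite Hf0, dot_zero_r. lra.
    - specialize (Hdecay z Hz). lra. }
  assert (Hstep : forall x h, 0 < h <= Rmin (phibar x) r ->
            exists Y, Y = vadd x (vscale h (f Y)) /\ F h x = f Y /\
                      vadd x (vscale h (F h x)) = Y /\ V Y <= V x - h * c Y).
  { intros x h Hh. destruct (HF x h ltac:(lra)) as [Y [HY HFY]].
    exists Y. repeat split; [exact HY | exact HFY | rewrite HFY; congruence |].
    pose proof (implicit_euler_decrease n f V gV x h Y Hconv Hgrad HY). unfold c. lra. }
  apply (discrete_lyapunov_URGAS n _ F V c r).
  - intros x. apply Rmin_pos; [apply Hphibar | exact Hr].
  - intros x. apply Rmin_r.
  - exact (gradient_continuous n V gV Hgrad).
  - exact HV0.
  - exact HVpos.
  - exact HVrad.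
  - apply continuous_opp, dot_continuous; [exact HgVc | apply lipschitz_continuous, Hlip].
  - exact Hc_nonneg.
  - intros z Hz. specialize (Hdecay z Hz). unfold c. lra.
  - intros x h Hh. destruct (Hstep x h Hh) as [Y [_ [_ [-> HVY]]]]. exact HVY.
  - intros x h s Hh Hs. destruct (Hstep x h Hh) as [Y [HY [HFY [_ HVY]]]].
    rewrite HFY. apply (implicit_euler_segment n f V x h s Y Hconv); try lra; [exact HY|].
    pose proof (Hc_nonneg Y). nra.
Qed.
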